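(* Let $n$ training samples carry labels in $\{1,\dots,K\}$ with indicator matrix $F\in\mathbb{R}^{K\times n}$, with $n_k=n/K$ samples in each class $k$. Let the basis $G_1,\dots,G_r$ ($r\le n$) be a subset of the training samples with $r_k=r/K$ basis vectors in each class $k$, and let $F_{G_i}$ be the class indicator of $G_i$. Let $W\in\mathbb{R}^{r\times n}$ be entrywise nonnegative with positive column sums, $S=\operatorname{diag}(\mathbf{1}^TW)$, $\tilde W=WS^{-1}$ of full row rank, $X^*=F\tilde W^T(\tilde W\tilde W^T)^{-1}$, $F\tilde W^T\ne0$, and spectral risk $\gamma=\|X^*\|_F^2\|\tilde W\|_F^2/\|X^*\tilde W\|_F^2$. If $W_{ij}=0$ whenever $F_{G_i}\neq F_j$, then $K\le\gamma\le r$.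
   Context: The columns of $F$ are standard basis vectors of $\mathbb{R}^K$: $F_j=e_k$ iff sample $j$ is in class $k$. $W_{ij}$ is the similarity between basis vector $G_i$ and training sample $j$. *)

From mathcomp Require Import all_boot all_order all_algebra.
Set Implicit Arguments. Unset Strict Implicit. Unset Printing Implicit Defensive.
Import Order.TTheory GRing.Theory Num.Theory.
Local Open Scope ring_scope.

Definition indicator_mx (R : nzRingType) (K n : nat) (lab : 'I_n -> 'I_K)
  : 'M[R]_(K, n) := \matrix_(k < K, j < n) (lab j == k)%:R.

Definition frob2 (R : nzRingType) (m p : nat) (A : 'M[R]_(m, p)) : R :=
  \sum_(i < m) \sum_(j < p) A i j ^+ 2.

Definition colsum_diag (R : nzRingType) (r n : nat) (W : 'M[R]_(r, n)) : 'M[R]_n :=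
  diag_mx (\row_(j < n) \sum_(i < r) W i j).

Definition Wtilde (R : fieldType) (r n : nat) (W : 'M[R]_(r, n)) : 'M[R]_(r, n) :=
  W *m invmx (colsum_diag W).

Definition Xstar (R : fieldType) (K r n : nat) (F : 'M[R]_(K, n)) (Wt : 'M[R]_(r, n))
  : 'M[R]_(K, r) := F *m Wt^T *m invmx (Wt *m Wt^T).

Definition spectral_risk (R : fieldType) (K r n : nat) (F : 'M[R]_(K, n))
  (W : 'M[R]_(r, n)) : R :=
  let Wt := Wtilde W in
  let X := Xstar F Wt in
  frob2 X * frob2 Wt / frob2 (X *m Wt).

(* Normalising the columns of W makes W~ column-stochastic, and since W only
   links samples of the same class, F = F_G W~ where F_G is the class indicator
   of the basis.  Full row rank of W~ then gives X* = F_G, so that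
   gamma = r ||W~||^2 / n.  Each column of W~ is a probability vector, so its
   squared norm is at most 1; it is supported on a class of r/K basis vectors,
   so by Cauchy-Schwarz its squared norm is at least K/r.  Summing over the n
   columns gives K <= gamma <= r. *)

From mathcomp Require Import all_boot all_order all_algebra.
From mathcomp Require Import ring.
Import Order.TTheory GRing.Theory Num.Theory.

Set Implicit Arguments. Unset Strict Implicit. Unset Printing Implicit Defensive.
Local Open Scope ring_scope.

Lemma sqr_sum_le_card_sum_sqr (R : realDomainType) (I : finType) (C : {pred I})
    (x : I -> R) :
  (\sum_(i in C) x i) ^+ 2 <= #|C|%:R * \sum_(i in C) x i ^+ 2.
Proof.
set s := \sum_(i in C) x i; set q := \sum_(i in C) x i ^+ 2; set c : R := #|C|%:R.
have [C0 | Cpos] := posnP #|C|.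
  by rewrite /s (eq_bigl _ _ (card0_eq C0)) big_pred0_eq expr0n /c C0 mul0r.
have expand : \sum_(i in C) (c * x i - s) ^+ 2 = c * (c * q - s ^+ 2).
  rewrite (eq_bigr (fun i => c ^+ 2 * x i ^+ 2 - 2 * c * s * x i + s ^+ 2));
    last by move=> i _; ring.
  rewrite big_split sumrB /= sumr_const -!mulr_sumr -/s -/q -mulr_natr.
  ring.
have : 0 <= \sum_(i in C) (c * x i - s) ^+ 2 by apply: sumr_ge0 => i _; apply: sqr_ge0.
by rewrite expand pmulr_rge0 ?ltr0n // subr_ge0.
Qed.

Lemma sumr_sqr_le1 (R : realDomainType) (I : finType) (x : I -> R) :
  (forall i, 0 <= x i) -> \sum_i x i = 1 -> \sum_i x i ^+ 2 <= 1.
Proof.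
move=> x_ge0 x_sum1; rewrite -[leRHS]x_sum1; apply: ler_sum => i _.
have x_le1 : x i <= 1.
  by rewrite -x_sum1 (bigD1 i) //= lerDl sumr_ge0.
by rewrite expr2 ler_piMr.
Qed.

Section Wtilde.
Variables (R : fieldType) (r n : nat) (W : 'M[R]_(r, n)).
Hypothesis colsum_neq0 : forall j, \sum_(i < r) W i j != 0.

Lemma Wtilde_coef i j : Wtilde W i j = W i j / \sum_(k < r) W k j.
Proof.
set d := \row_j \sum_(i < r) W i j; set e := \row_j (\sum_(i < r) W i j)^-1.
have de : diag_mx d *m diag_mx e = 1%:M.
  apply/matrixP => a b; rewrite mul_mx_diag !mxE.
  by case: (eqVneq a b) => [->|_]; rewrite ?mulr1n ?mulfV ?mul0r.
have [d_unit _] := mulmx1_unit de.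
rewrite /Wtilde; have -> : invmx (colsum_diag W) = diag_mx e.
  by rewrite -[invmx _]mulmx1 -de mulmxA mulVmx // mul1mx.
by rewrite mul_mx_diag !mxE.
Qed.

Lemma Wtilde_colsum j : \sum_i Wtilde W i j = 1.
Proof.
by under eq_bigr do rewrite Wtilde_coef; rewrite -mulr_suml divff.
Qed.

End Wtilde.

Lemma frob2_indicator_mx (R : nzRingType) K m (lab : 'I_m -> 'I_K) :
  frob2 (indicator_mx R lab) = m%:R.
Proof.
rewrite /frob2 exchange_big /= -[m in RHS]card_ord -sumr_const.
apply: eq_bigr => j _; rewrite (bigD1 (lab j)) //= big1 ?addr0.
  by rewrite !mxE eqxx expr1n.
by move=> k /negPf neq_k; rewrite !mxE eq_sym neq_k expr0n.
Qed.

Lemma indicator_mx_factor (R : nzRingType) K r n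
    (labr : 'I_r -> 'I_K) (labn : 'I_n -> 'I_K) (M : 'M[R]_(r, n)) :
  (forall j, \sum_i M i j = 1) ->
  (forall i j, labr i != labn j -> M i j = 0) ->
  indicator_mx R labn = indicator_mx R labr *m M.
Proof.
move=> M_colsum M_supp; apply/matrixP => k j; rewrite !mxE.
rewrite (eq_bigr (fun i => (labn j == k)%:R * M i j)) -?mulr_sumr ?M_colsum ?mulr1 //.
move=> i _; rewrite mxE.
by case: (eqVneq (labr i) (labn j)) => [->|/M_supp ->]; rewrite ?mulr0.
Qed.

Lemma row_free_mul_trmx_unit (R : realFieldType) m p (A : 'M[R]_(m, p)) :
  row_free A -> A *m A^T \in unitmx.
Proof.
move=> A_free; rewrite -row_free_unit; apply: inj_row_free => v vAAt0.
have vA0 : v *m A = 0.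
  have : (v *m A *m (v *m A)^T) 0 0 = 0.
    by rewrite trmx_mul mulmxA -(mulmxA v) vAAt0 mul0mx mxE.
  rewrite mxE => /eqP; rewrite psumr_eq0 => [/allP vA_sqr0|j _]; last first.
    by rewrite !mxE -expr2 sqr_ge0.
  apply/matrixP => a b; rewrite ord1 mxE.
  by have := vA_sqr0 b (mem_index_enum _); rewrite !mxE -expr2 sqrf_eq0 => /eqP.
by apply/eqP; rewrite -(mulmx_free_eq0 _ A_free) vA0.
Qed.

Lemma Xstar_factor (R : fieldType) K r n (B : 'M[R]_(K, r)) (A : 'M[R]_(r, n)) :
  A *m A^T \in unitmx -> Xstar (B *m A) A = B.
Proof. by move=> AAt_unit; rewrite /Xstar -(mulmxA B) mulmxK. Qed.

Lemma spectral_risk_factor (R : realFieldType) K r n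
    (F : 'M[R]_(K, n)) (B : 'M[R]_(K, r)) (W : 'M[R]_(r, n)) :
  row_free (Wtilde W) -> F = B *m Wtilde W ->
  spectral_risk F W = frob2 B * frob2 (Wtilde W) / frob2 F.
Proof.
move=> Wt_free F_def; rewrite /spectral_risk /= F_def Xstar_factor //.
exact: row_free_mul_trmx_unit.
Qed.

Lemma frob2_col_stochastic_le (R : realDomainType) r n (A : 'M[R]_(r, n)) :
  (forall i j, 0 <= A i j) -> (forall j, \sum_i A i j = 1) -> frob2 A <= n%:R.
Proof.
move=> A_ge0 A_colsum; have -> : n%:R = \sum_(j < n) 1 :> R.
  by rewrite sumr_const card_ord.
rewrite /frob2 exchange_big /=; apply: ler_sum => j _; exact: sumr_sqr_le1.
Qed.

Lemma frob2_class_supported_ge (R : realDomainType) K r n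
    (labr : 'I_r -> 'I_K) (labn : 'I_n -> 'I_K) (A : 'M[R]_(r, n)) :
  (forall k, (#|[set i | labr i == k]| * K)%N = r) ->
  (forall j, \sum_i A i j = 1) ->
  (forall i j, labr i != labn j -> A i j = 0) ->
  K%:R * n%:R <= r%:R * frob2 A.
Proof.
move=> class_size A_colsum A_supp.
have -> : n%:R = \sum_(j < n) 1 :> R by rewrite sumr_const card_ord.
rewrite /frob2 exchange_big /= !mulr_sumr; apply: ler_sum => j _; rewrite mulr1.
set C := [set i | labr i == labn j].
have sum_in_C : \sum_(i in C) A i j = 1.
  rewrite -(A_colsum j) [RHS](bigID (mem C)) /= [X in _ + X]big1 ?addr0 //.
  by move=> i; rewrite inE => /A_supp ->.
have sqr_in_C : \sum_(i in C) A i j ^+ 2 <= \sum_i A i j ^+ 2.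
  by rewrite [leRHS](bigID (mem C)) /= lerDl sumr_ge0 // => i _; apply: sqr_ge0.
have -> : r%:R = #|C|%:R * K%:R :> R by rewrite -natrM class_size.
rewrite mulrAC -[leLHS]mul1r ler_wpM2r ?ler0n // -[leLHS](expr1n R 2) -[in leLHS]sum_in_C.
apply: le_trans (sqr_sum_le_card_sum_sqr C (fun i => A i j)) _.
by rewrite ler_wpM2l ?ler0n.
Qed.

Theorem corollary1 (R : realFieldType) (K n r : nat)
  (lab : 'I_n -> 'I_K)
  (hn : forall k : 'I_K, (#|[set j | lab j == k]| * K)%N = n)
  (g : 'I_r -> 'I_n) (hg : injective g) (hrn : (r <= n)%N)
  (hr : forall k : 'I_K, (#|[set i | lab (g i) == k]| * K)%N = r)
  (W : 'M[R]_(r, n))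
  (hW0 : forall i j, 0 <= W i j)
  (hWcol : forall j, 0 < \sum_(i < r) W i j)
  (hrank : \rank (Wtilde W) = r)
  (hFW : indicator_mx R lab *m (Wtilde W)^T != 0)
  (hsupp : forall i j, lab (g i) != lab j -> W i j = 0) :
  K%:R <= spectral_risk (indicator_mx R lab) W <= r%:R.
Proof.
have colsum_neq0 j : \sum_(i < r) W i j != 0 by rewrite gt_eqF.
have Wt_ge0 i j : 0 <= Wtilde W i j.
  by rewrite Wtilde_coef // divr_ge0 // ltW.
have Wt_supp i j : lab (g i) != lab j -> Wtilde W i j = 0.
  by move=> /hsupp W0; rewrite Wtilde_coef // W0 mul0r.
have Wt_colsum := Wtilde_colsum colsum_neq0.
have n_gt0 : (0 < n)%N.
  rewrite lt0n; apply: contraNneq hFW => n0; apply/eqP/matrixP => k i.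
  by rewrite !mxE big1 // => j; move: (ltn_ord j); rewrite [X in (_ < X)%N]n0.
have F_factor := indicator_mx_factor Wt_colsum Wt_supp.
have Wt_free : row_free (Wtilde W) by rewrite /row_free hrank.
rewrite (spectral_risk_factor Wt_free F_factor) !frob2_indicator_mx.
apply/andP; split.
  rewrite ler_pdivlMr ?ltr0n //.
  exact: frob2_class_supported_ge hr Wt_colsum Wt_supp.
rewrite ler_pdivrMr ?ltr0n // ler_wpM2l ?ler0n //.
exact: frob2_col_stochastic_le.
Qed.
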